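(* Let $m\ge1$, $\tilde{\mathbf{x}}\in\mathbb{R}^m$, $\hat{\mathbf{b}}\in\Delta_m:=\{\mathbf{b}\in\mathbb{R}^m:\mathbf{b}\ge\mathbf{0},\ \mathbf{b}^\top\mathbf{1}=1\}$, $\lambda>0$, $0\le\gamma<1$, $\kappa\ge 0$, and let $\boldsymbol{\Sigma}\in\mathbb{R}^{m\times m}$ be symmetric positive definite with Cholesky factorization $\boldsymbol{\Sigma}=\mathbf{U}^\top\mathbf{U}$ ($\mathbf{U}$ upper triangular). Let $\sigma=\sqrt{\sum_{i=1}^m\sigma_i^2}$ where $\sigma_i^2$ are the diagonal entries of $\boldsymbol{\Sigma}$, and assume $\max_i \tilde{x}_i>\kappa\sigma+\lambda$. Define the ellipsoid $\mathcal{U}=\{\mathbf{x}\in\mathbb{R}^m:(\mathbf{x}-\tilde{\mathbf{x}})^\top\boldsymbol{\Sigma}^{-1}(\mathbf{x}-\tilde{\mathbf{x}})\le\kappa^2\}$ and the robust problem $$\text{(R)}\qquad \max_{w\ge0,\ \mathbf{b}\ge\mathbf{0}}\ \min_{\mathbf{x}\in\mathcal{U}}\{w\,\mathbf{b}^\top\mathbf{x}\}-\lambda\|\hat{\mathbf{b}}-w\mathbf{b}\|_1\quad\text{s.t.}\quad w+\gamma\|\hat{\mathbf{b}}-w\mathbf{b}\|_1=1,\ \ \mathbf{b}^\top\mathbf{1}=1,$$ and the second-order cone program $$\text{(S)}\qquad \max_{\mathbf{b}\ge\mathbf{0}}\ \mathbf{b}^\top\tilde{\mathbf{x}}-\lambda\|\hat{\mathbf{b}}-\mathbf{b}\|_1-\kappa\|\mathbf{U}\mathbf{b}\|_2\quad\text{s.t.}\quad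 \mathbf{b}^\top\mathbf{1}+\gamma\|\hat{\mathbf{b}}-\mathbf{b}\|_1\le1 .$$ Let $\mathbf{b}^*$ be an optimal solution of (S). Then $\big(\mathbf{1}^\top\mathbf{b}^*,\ \mathbf{b}^*/\mathbf{1}^\top\mathbf{b}^*\big)$ is an optimal solution of (R).
   Context: $\|\cdot\|_1,\|\cdot\|_2$ are the $\ell_1$ and Euclidean norms, $\mathbf{1}$ the all-ones vector, vector inequalities componentwise. $\tilde{\mathbf{x}}$ plays the role of a predicted price-relative vector, $\gamma$ a proportional transaction cost rate, $\lambda$ a rebalancing penalty and $\kappa$ the size of the uncertainty set. *)

From HB Require Import structures.
From mathcomp Require Import all_boot all_order all_algebra.
From mathcomp Require Import classical_sets reals.
Set Implicit Arguments. Unset Strict Implicit. Unset Printing Implicit Defensive.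
Import Order.TTheory GRing.Theory Num.Theory.
Local Open Scope ring_scope.
Local Open Scope classical_set_scope.

Section Defs.
Variables (R : realType) (m : nat).
Implicit Types (v b x : 'cV[R]_m) (S U : 'M[R]_m).

Definition nonneg v : Prop := forall i, 0 <= v i 0.
Definition sum1 v : R := \sum_i v i 0.
Definition norm1 v : R := \sum_i `|v i 0|.
Definition norm2 v : R := Num.sqrt (\sum_i (v i 0) ^+ 2).
Definition dotp b x : R := (b^T *m x) 0 0.

Definition simplex v : Prop := nonneg v /\ sum1 v = 1.

Definition sym_pos_def S : Prop :=
  S^T = S /\ forall v, v != 0 -> 0 < (v^T *m S *m v) 0 0.

Definition cholesky_factor S U : Prop :=
  S = U^T *m U /\ (forall i j : 'I_m, (j < i)%N -> U i j = 0)
  /\ (forall i, 0 < U i i).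

Definition sigma_tot S : R := Num.sqrt (\sum_i S i i).

Definition ellipsoid S xt (kappa : R) : set 'cV[R]_m :=
  [set x | ((x - xt)^T *m invmx S *m (x - xt)) 0 0 <= kappa ^+ 2].

Definition R_feasible (gamma : R) bh (w : R) b : Prop :=
  0 <= w /\ nonneg b /\ w + gamma * norm1 (bh - w *: b) = 1 /\ sum1 b = 1.

Definition R_obj S xt kappa lambda bh (w : R) b : R :=
  inf [set w * dotp b x | x in ellipsoid S xt kappa]
  - lambda * norm1 (bh - w *: b).

Definition R_optimal S xt kappa lambda gamma bh (w : R) b : Prop :=
  R_feasible gamma bh w b /\
  forall w' b', R_feasible gamma bh w' b' ->
    R_obj S xt kappa lambda bh w' b' <= R_obj S xt kappa lambda bh w b.

Definition S_feasible (gamma : R) bh b : Prop :=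
  nonneg b /\ sum1 b + gamma * norm1 (bh - b) <= 1.

Definition S_obj U xt (kappa lambda : R) bh b : R :=
  dotp b xt - lambda * norm1 (bh - b) - kappa * norm2 (U *m b).

Definition S_optimal U xt kappa lambda gamma bh b : Prop :=
  S_feasible gamma bh b /\
  forall b', S_feasible gamma bh b' ->
    S_obj U xt kappa lambda bh b' <= S_obj U xt kappa lambda bh b.

End Defs.

From HB Require Import structures.
From mathcomp Require Import all_boot all_order all_algebra.
From mathcomp Require Import classical_sets reals.
From mathcomp Require Import lra.
Import Order.TTheory GRing.Theory Num.Theory.
Set Implicit Arguments. Unset Strict Implicit. Unset Printing Implicit Defensive.
Local Open Scope ring_scope.
Local Open Scope classical_set_scope.

(** The Cholesky factor maps the Euclidean ball of radius [kappa] onto the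
    ellipsoid, [x = xt + U^T y], so by Cauchy-Schwarz the worst case of
    [c^T x] over the ellipsoid is [c^T xt - kappa |U c|]. Hence the objective
    of (R) at [(w, b)] is the objective of (S) at [w b]; every (R)-feasible
    [(w, b)] yields the (S)-feasible [w b], and an (S)-feasible [b] with tight
    budget normalizes to the (R)-feasible [(1^T b, b / 1^T b)].
    The budget of an optimal [b*] of (S) is tight: otherwise moving mass [eps]
    onto an asset [i] with [xt_i > kappa sigma + lambda] costs at most
    [(1 + gamma) eps] budget and gains at least
    [eps (xt_i - lambda - kappa |U e_i|) >= eps (xt_i - lambda - kappa sigma) > 0],
    since [|U e_i|^2 = Sigma_ii]. Finally [gamma < 1] and [|bh|_1 = 1] exclude
    [1^T b* = 0]. *)

Section Euclid.
Variables (R : realType) (m : nat).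
Implicit Types (a b v x y : 'cV[R]_m).

Lemma dotpE b x : dotp b x = \sum_i b i 0 * x i 0.
Proof. by rewrite /dotp !mxE; apply: eq_bigr => i _; rewrite mxE. Qed.

Lemma dotpC b x : dotp b x = dotp x b.
Proof. by rewrite !dotpE; apply: eq_bigr => i _; rewrite mulrC. Qed.

Lemma dotpDr a b x : dotp a (b + x) = dotp a b + dotp a x.
Proof. by rewrite /dotp mulmxDr mxE. Qed.

Lemma dotpDl a b x : dotp (a + b) x = dotp a x + dotp b x.
Proof. by rewrite dotpC dotpDr !(dotpC x). Qed.

Lemma dotpZl k b x : dotp (k *: b) x = k * dotp b x.
Proof. by rewrite /dotp linearZ /= -scalemxAl mxE. Qed.

Lemma dotpZr k b x : dotp b (k *: x) = k * dotp b x.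
Proof. by rewrite dotpC dotpZl dotpC. Qed.

Lemma dotp_delta i x : dotp (delta_mx i 0) x = x i 0.
Proof. by rewrite /dotp trmx_delta -rowE mxE. Qed.

Lemma dotp_trmx (A : 'M[R]_m) b y : dotp b (A^T *m y) = dotp (A *m b) y.
Proof. by rewrite /dotp mulmxA trmx_mul. Qed.

Lemma dotpp_ge0 v : 0 <= dotp v v.
Proof. by rewrite dotpE sumr_ge0 // => i _; rewrite -expr2 sqr_ge0. Qed.

Lemma norm2_ge0 v : 0 <= norm2 v.
Proof. exact: sqrtr_ge0. Qed.

Lemma sqr_norm2 v : norm2 v ^+ 2 = dotp v v.
Proof.
have sqE : \sum_i v i 0 ^+ 2 = dotp v v.
  by rewrite dotpE; apply: eq_bigr => i _; rewrite expr2.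
by rewrite /norm2 sqE sqr_sqrtr // dotpp_ge0.
Qed.

Lemma norm2_eq0 v : norm2 v = 0 -> v = 0.
Proof.
move/eqP; rewrite sqrtr_eq0 => sq_le0; apply/matrixP => i j.
rewrite ord1 mxE; apply/eqP; rewrite -sqrf_eq0; apply/eqP.
have sq_ge0 k : predT k -> 0 <= v k 0 ^+ 2 by rewrite sqr_ge0.
have sq_eq0 : \sum_k v k 0 ^+ 2 = 0 by apply/le_anti; rewrite sq_le0 sumr_ge0.
exact: psumr_eq0P sq_ge0 sq_eq0 i isT.
Qed.

Lemma norm2Z k v : norm2 (k *: v) = `|k| * norm2 v.
Proof.
rewrite /norm2 -sqrtr_sqr -sqrtrM ?sqr_ge0 // mulr_sumr.
by congr Num.sqrt; apply: eq_bigr => i _; rewrite mxE exprMn.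
Qed.

Lemma norm2N v : norm2 (- v) = norm2 v.
Proof. by rewrite -scaleN1r norm2Z normrN1 mul1r. Qed.

Lemma dotp_le_norm2 a b : dotp a b <= norm2 a * norm2 b.
Proof.
have [a0|a_neq0] := eqVneq (norm2 a) 0.
  by rewrite a0 mul0r (norm2_eq0 a0) /dotp linear0 mul0mx mxE.
have [b0|b_neq0] := eqVneq (norm2 b) 0.
  by rewrite b0 mulr0 (norm2_eq0 b0) /dotp mulmx0 mxE.
have a_gt0 : 0 < norm2 a by rewrite lt_def a_neq0 norm2_ge0.
have b_gt0 : 0 < norm2 b by rewrite lt_def b_neq0 norm2_ge0.
(* [0 <= |B a - A b|^2 = 2 A B (A B - a.b)] for [A = |a|], [B = |b|] *)
have := dotpp_ge0 (norm2 b *: a - norm2 a *: b).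
rewrite -scaleNr !(dotpDl, dotpDr, dotpZl, dotpZr) (dotpC b a) -!sqr_norm2.
move=> expansion_ge0; rewrite -subr_ge0 -(pmulr_rge0 _ (mulr_gt0 a_gt0 b_gt0)).
lra.
Qed.

Lemma norm2D a b : norm2 (a + b) <= norm2 a + norm2 b.
Proof.
rewrite -ler_sqr ?nnegrE ?addr_ge0 ?norm2_ge0 //.
rewrite sqr_norm2 !(dotpDl, dotpDr) (dotpC b a) -!sqr_norm2.
have := dotp_le_norm2 a b; lra.
Qed.

Lemma dotp_ge_norm2 a y : - (norm2 a * norm2 y) <= dotp a y.
Proof.
have := dotp_le_norm2 a (- y).
by rewrite norm2N -scaleN1r dotpZr mulN1r lerNl.
Qed.

Lemma dotp_ball_ge (kappa : R) a y : 0 <= kappa -> norm2 y <= kappa ->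
  - (kappa * norm2 a) <= dotp a y.
Proof.
move=> kappa_ge0 y_le; apply: le_trans (dotp_ge_norm2 a y).
by rewrite lerN2 mulrC ler_wpM2r ?norm2_ge0.
Qed.

(* the minimum is attained at [- (kappa / |a|) a], which is [0] when [a = 0] *)
Lemma dotp_ball_min (kappa : R) a : 0 <= kappa ->
  exists2 y, norm2 y <= kappa & dotp a y = - (kappa * norm2 a).
Proof.
move=> kappa_ge0; exists (- (kappa / norm2 a) *: a).
  rewrite norm2Z normrN ger0_norm ?divr_ge0 ?norm2_ge0 //.
  have [->|a_neq0] := eqVneq (norm2 a) 0; first by rewrite mulr0.
  by rewrite divfK.
rewrite dotpZr -sqr_norm2.
have [->|a_neq0] := eqVneq (norm2 a) 0; first by rewrite expr0n /= !(mulr0, oppr0).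
by rewrite expr2 mulrA mulNr divfK // mulNr.
Qed.

End Euclid.

Lemma inf_attained (R : realType) (E : set R) x :
  E x -> lbound E x -> inf E = x.
Proof.
move=> Ex Elb; apply/le_anti/andP; split.
  exact: ge_inf (ex_intro _ x Elb) _ Ex.
exact: lb_le_inf (ex_intro _ x Ex) Elb.
Qed.

Section Cholesky.
Variables (R : realType) (m : nat) (Sigma U : 'M[R]_m).
Hypothesis cholU : cholesky_factor Sigma U.
Implicit Types (c xt y : 'cV[R]_m).

Lemma cholesky_unitmx : U^T \in unitmx.
Proof.
have [_ [U_trig U_diag]] := cholU.
have Ut_trig : is_trig_mx U^T by apply/is_trig_mxP => i j lt_ij; rewrite mxE U_trig.
rewrite unitmxE det_trig // unitf_gt0 // prodr_gt0 // => i _.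
by rewrite mxE.
Qed.

Lemma cholesky_invmx : U *m invmx Sigma *m U^T = 1%:M.
Proof.
have [Sigma_def _] := cholU.
have Sigma_unit : Sigma \in unitmx.
  by rewrite Sigma_def unitmx_mul cholesky_unitmx -unitmx_tr cholesky_unitmx.
transitivity (invmx U^T *m (U^T *m U *m invmx Sigma) *m U^T).
  by rewrite !mulmxA mulVmx ?cholesky_unitmx // mul1mx.
by rewrite -Sigma_def mulmxV // mulmx1 mulVmx ?cholesky_unitmx.
Qed.

Lemma cholesky_quad y :
  ((U^T *m y)^T *m invmx Sigma *m (U^T *m y)) 0 0 = norm2 y ^+ 2.
Proof.
rewrite trmx_mul trmxK sqr_norm2 /dotp.
have -> : y^T *m U *m invmx Sigma *m (U^T *m y) =
          y^T *m (U *m invmx Sigma *m U^T) *m y by rewrite !mulmxA.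
by rewrite cholesky_invmx mulmx1.
Qed.

Lemma ellipsoid_cholesky xt (kappa : R) y : 0 <= kappa ->
  ellipsoid Sigma xt kappa (xt + U^T *m y) <-> norm2 y <= kappa.
Proof.
move=> kappa_ge0; rewrite /ellipsoid /= addrC addKr cholesky_quad.
by rewrite ler_sqr ?nnegrE ?norm2_ge0.
Qed.

Lemma inf_ellipsoid_dotp xt (kappa : R) c : 0 <= kappa ->
  inf [set dotp c x | x in ellipsoid Sigma xt kappa] =
  dotp c xt - kappa * norm2 (U *m c).
Proof.
move=> kappa_ge0; apply: inf_attained.
  have [y y_le yE] := dotp_ball_min (U *m c) kappa_ge0.
  exists (xt + U^T *m y); first exact/ellipsoid_cholesky.
  by rewrite dotpDr dotp_trmx yE.
move=> _ [x x_in <-].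
set y := invmx U^T *m (x - xt).
have xE : x = xt + U^T *m y by rewrite mulKVmx ?cholesky_unitmx // addrC subrK.
rewrite xE dotpDr dotp_trmx lerD2l; apply: dotp_ball_ge => //.
by apply/(ellipsoid_cholesky xt) => //; rewrite -xE.
Qed.

Lemma cholesky_diag j : Sigma j j = norm2 (col j U) ^+ 2.
Proof.
have [-> _] := cholU.
rewrite sqr_norm2 dotpE mxE.
by apply: eq_bigr => k _; rewrite !mxE.
Qed.

Lemma norm2_col_le_sigma_tot i : norm2 (col i U) <= sigma_tot Sigma.
Proof.
rewrite /sigma_tot; under eq_bigr do rewrite cholesky_diag.
rewrite -(ger0_norm (norm2_ge0 (col i U))) -sqrtr_sqr ler_sqrt; last first.
  by apply: sumr_ge0 => j _; rewrite sqr_ge0.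
by rewrite (bigD1 i) //= lerDl sumr_ge0 // => j _; rewrite sqr_ge0.
Qed.

End Cholesky.

Lemma R_obj_S_obj (R : realType) (m : nat) (Sigma U : 'M[R]_m)
    (xt bh b : 'cV[R]_m) (kappa lambda w : R) :
  cholesky_factor Sigma U -> 0 <= kappa ->
  R_obj Sigma xt kappa lambda bh w b = S_obj U xt kappa lambda bh (w *: b).
Proof.
move=> cholU kappa_ge0; rewrite /R_obj /S_obj.
have -> : [set w * dotp b x | x in ellipsoid Sigma xt kappa] =
          [set dotp (w *: b) x | x in ellipsoid Sigma xt kappa].
  by apply: eq_imagel => x _; rewrite dotpZl.
by rewrite (inf_ellipsoid_dotp cholU) // addrAC.
Qed.

Section Budget.
Variables (R : realType) (m : nat).
Implicit Types (b c bh xt : 'cV[R]_m) (U : 'M[R]_m) (eps gamma kappa lambda : R).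

Lemma sum1D b c : sum1 (b + c) = sum1 b + sum1 c.
Proof. by rewrite /sum1 -big_split; apply: eq_bigr => i _; rewrite mxE. Qed.

Lemma sum1Z k b : sum1 (k *: b) = k * sum1 b.
Proof. by rewrite /sum1 mulr_sumr; apply: eq_bigr => i _; rewrite mxE. Qed.

Lemma sum1_delta i : sum1 (delta_mx i 0 : 'cV[R]_m) = 1.
Proof.
rewrite /sum1 (bigD1 i) //= big1 ?addr0 => [|j ji]; rewrite mxE ?eqxx //.
by rewrite (negbTE ji).
Qed.

Lemma nonneg_delta i : nonneg (delta_mx i 0 : 'cV[R]_m).
Proof. by move=> j; rewrite mxE ler0n. Qed.

Lemma nonneg_norm1 b : nonneg b -> norm1 b = sum1 b.
Proof. by move=> b_ge0; apply: eq_bigr => i _; rewrite ger0_norm. Qed.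

Lemma nonneg_sum1_eq0 b : nonneg b -> sum1 b = 0 -> b = 0.
Proof.
move=> b_ge0 b_sum0; apply/matrixP => i j; rewrite ord1 mxE.
exact: psumr_eq0P (fun k _ => b_ge0 k) b_sum0 i isT.
Qed.

Lemma norm1D b c : norm1 (b + c) <= norm1 b + norm1 c.
Proof. by rewrite /norm1 -big_split ler_sum // => i _; rewrite mxE ler_normD. Qed.

Lemma norm1Z k b : norm1 (k *: b) = `|k| * norm1 b.
Proof. by rewrite /norm1 mulr_sumr; apply: eq_bigr => i _; rewrite mxE normrM. Qed.

Lemma norm1_shift bh b eps i :
  norm1 (bh - (b + eps *: delta_mx i 0)) <= norm1 (bh - b) + `|eps|.
Proof.
rewrite opprD addrA -scaleNr; apply: le_trans (norm1D _ _) _.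
by rewrite norm1Z (nonneg_norm1 (nonneg_delta i)) sum1_delta mulr1 normrN.
Qed.

Lemma budget_shift gamma bh b eps i : 0 <= gamma -> 0 <= eps ->
  sum1 (b + eps *: delta_mx i 0) + gamma * norm1 (bh - (b + eps *: delta_mx i 0))
  <= sum1 b + gamma * norm1 (bh - b) + (1 + gamma) * eps.
Proof.
move=> gamma_ge0 eps_ge0; rewrite sum1D sum1Z sum1_delta mulr1.
have := ler_wpM2l gamma_ge0 (norm1_shift bh b eps i).
rewrite ger0_norm //; lra.
Qed.

Lemma S_obj_shift U xt kappa lambda bh b eps i :
  0 <= kappa -> 0 <= lambda -> 0 <= eps ->
  S_obj U xt kappa lambda bh b + eps * (xt i 0 - lambda - kappa * norm2 (col i U))
  <= S_obj U xt kappa lambda bh (b + eps *: delta_mx i 0).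
Proof.
move=> kappa_ge0 lambda_ge0 eps_ge0.
have norm1_le := ler_wpM2l lambda_ge0 (norm1_shift bh b eps i).
have norm2_le : norm2 (U *m (b + eps *: delta_mx i 0))
                <= norm2 (U *m b) + eps * norm2 (col i U).
  rewrite mulmxDr -scalemxAr -colE; apply: le_trans (norm2D _ _) _.
  by rewrite norm2Z ger0_norm.
have := ler_wpM2l kappa_ge0 norm2_le.
move: norm1_le; rewrite /S_obj dotpDl dotpZl dotp_delta ger0_norm //; lra.
Qed.

End Budget.

Section Optimality.
Variables (R : realType) (m : nat).
Implicit Types (b bh xt : 'cV[R]_m) (Sigma U : 'M[R]_m) (gamma kappa lambda w : R).

Lemma S_optimal_budget_tight Sigma U xt kappa lambda gamma bh bs i :
  cholesky_factor Sigma U -> 0 <= kappa -> 0 <= lambda -> 0 <= gamma ->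
  kappa * sigma_tot Sigma + lambda < xt i 0 ->
  S_optimal U xt kappa lambda gamma bh bs ->
  sum1 bs + gamma * norm1 (bh - bs) = 1.
Proof.
move=> cholU kappa_ge0 lambda_ge0 gamma_ge0 xt_i [[bs_ge0 bs_budget] bs_opt].
apply/eqP; rewrite eq_le bs_budget /= leNgt; apply/negP => slack.
have [eps eps_gt0 eps_budget] : exists2 eps : R, 0 < eps &
    (1 + gamma) * eps = 1 - (sum1 bs + gamma * norm1 (bh - bs)).
  exists ((1 - (sum1 bs + gamma * norm1 (bh - bs))) / (1 + gamma)).
    by rewrite divr_gt0 ?subr_gt0 //; lra.
  by rewrite mulrC divfK //; apply/eqP => /eqP; lra.
have shifted_feas : S_feasible gamma bh (bs + eps *: delta_mx i 0).
  split=> [j|]; first by rewrite !mxE (addr_ge0 (bs_ge0 j)) // mulr_ge0 ?ler0n // ltW.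
  by have := budget_shift bh bs i gamma_ge0 (ltW eps_gt0); lra.
have gain : 0 < eps * (xt i 0 - lambda - kappa * norm2 (col i U)).
  apply: mulr_gt0 => //.
  by have := ler_wpM2l kappa_ge0 (norm2_col_le_sigma_tot cholU i); lra.
have := bs_opt _ shifted_feas.
by have := S_obj_shift U xt bh bs i kappa_ge0 lambda_ge0 (ltW eps_gt0); lra.
Qed.

Lemma budget_tight_sum1_gt0 gamma bh b : gamma < 1 -> simplex bh -> nonneg b ->
  sum1 b + gamma * norm1 (bh - b) = 1 -> 0 < sum1 b.
Proof.
move=> gamma_lt1 [bh_ge0 bh_sum] b_ge0 tight.
rewrite lt_def (sumr_ge0 _ (fun i _ => b_ge0 i)) andbT; apply/eqP => b_sum0.
move: tight; rewrite b_sum0 (nonneg_sum1_eq0 b_ge0 b_sum0) subr0.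
by rewrite nonneg_norm1 // bh_sum; lra.
Qed.

Lemma R_feasible_S_feasible gamma bh w b :
  R_feasible gamma bh w b -> S_feasible gamma bh (w *: b).
Proof.
move=> [w_ge0 [b_ge0 [budget b_sum]]].
split; first by move=> i; rewrite mxE (mulr_ge0 w_ge0 (b_ge0 i)).
by rewrite sum1Z b_sum mulr1 budget.
Qed.

Lemma budget_tight_R_feasible gamma bh b : nonneg b -> 0 < sum1 b ->
  sum1 b + gamma * norm1 (bh - b) = 1 ->
  R_feasible gamma bh (sum1 b) ((sum1 b)^-1 *: b).
Proof.
move=> b_ge0 sum_gt0 tight; split; first exact: ltW.
split; first by move=> i; rewrite mxE (mulr_ge0 _ (b_ge0 i)) // invr_ge0 ltW.
by rewrite scalerA mulfV ?gt_eqF // scale1r sum1Z mulVf ?gt_eqF.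
Qed.

End Optimality.

Theorem theorem2 (R : realType) (m : nat) (hm : (0 < m)%N)
  (xt bh : 'cV[R]_m) (lambda gamma kappa : R) (Sigma U : 'M[R]_m)
  (hbh : simplex bh) (hlambda : 0 < lambda)
  (hgamma0 : 0 <= gamma) (hgamma1 : gamma < 1) (hkappa : 0 <= kappa)
  (hSigma : sym_pos_def Sigma) (hU : cholesky_factor Sigma U)
  (hmax : exists i : 'I_m, kappa * sigma_tot Sigma + lambda < xt i 0)
  (bs : 'cV[R]_m) (hbs : S_optimal U xt kappa lambda gamma bh bs) :
  R_optimal Sigma xt kappa lambda gamma bh (sum1 bs) ((sum1 bs)^-1 *: bs).
Proof.
have [i xt_i] := hmax.
have [[bs_ge0 _] bs_opt] := hbs.
have tight := S_optimal_budget_tight hU hkappa (ltW hlambda) hgamma0 xt_i hbs.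
have sum_gt0 := budget_tight_sum1_gt0 hgamma1 hbh bs_ge0 tight.
split; first exact: budget_tight_R_feasible.
move=> w b Rb; rewrite !(R_obj_S_obj _ _ _ _ _ hU hkappa).
rewrite scalerA mulfV ?gt_eqF // scale1r.
exact/bs_opt/R_feasible_S_feasible.
Qed.
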